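(* Let $a_1,b_1>0$ and $\alpha>0$ with $\alpha\neq 1$, and set $a_2=\alpha a_1$, $b_2=\alpha b_1$ (so that $p_2=\alpha p_1$). Then, with $C_1,C_2$ as defined in the context, $\sup_{\omega\ge0}|C_1(j\omega)C_2(j\omega)|<1$.
   Context: For constants $a_1,b_1,a_2,b_2>0$ and complex $s$, set $p_1(s)=a_1+b_1 s$, $p_2(s)=a_2+b_2 s$, $q=p_1+p_2$, and $m(s)=(s^2+q)\sqrt{1-\frac{4p_1p_2}{(s^2+q)^2}}$ with $\sqrt{\cdot}$ the principal complex square root (nonnegative real part), so $m^2=(s^2+q)^2-4p_1p_2$. Define $C_1=\frac{(s^2+q)-m}{2p_2}$ and $C_2=\frac{(s^2+q)-m}{2p_1}$. $j$ denotes the imaginary unit. *)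

From Stdlib Require Import Reals Lra.
Open Scope R_scope.

Record Cplx := mkC { Re : R ; Im : R }.

Definition Cadd (z w : Cplx) : Cplx := mkC (Re z + Re w) (Im z + Im w).
Definition Csub (z w : Cplx) : Cplx := mkC (Re z - Re w) (Im z - Im w).
Definition Cmul (z w : Cplx) : Cplx :=
  mkC (Re z * Re w - Im z * Im w) (Re z * Im w + Im z * Re w).
(* inverse; Cinv 0 = 0 by the Stdlib convention /0 *)
Definition Cinv (z : Cplx) : Cplx :=
  let d := Re z * Re z + Im z * Im z in mkC (Re z / d) (- Im z / d).
Definition Cdiv (z w : Cplx) : Cplx := Cmul z (Cinv w).
Definition RtoC (x : R) : Cplx := mkC x 0.
Definition Cnorm (z : Cplx) : R := sqrt (Re z * Re z + Im z * Im z).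

(* principal square root: nonnegative real part; on the negative real axis
   (real part 0) the root with positive imaginary part, i.e. arg in (-pi/2, pi/2]. *)
Definition Csqrt (z : Cplx) : Cplx :=
  let r := Cnorm z in
  mkC (sqrt ((r + Re z) / 2))
      (if Rlt_dec (Im z) 0 then - sqrt ((r - Re z) / 2) else sqrt ((r - Re z) / 2)).

Definition Cj : Cplx := mkC 0 1.

Section Defs.
Variables a1 b1 a2 b2 : R.

Definition p1 (s : Cplx) : Cplx := Cadd (RtoC a1) (Cmul (RtoC b1) s).
Definition p2 (s : Cplx) : Cplx := Cadd (RtoC a2) (Cmul (RtoC b2) s).
Definition q (s : Cplx) : Cplx := Cadd (p1 s) (p2 s).

Definition mfun (s : Cplx) : Cplx :=
  let t := Cadd (Cmul s s) (q s) in
  Cmul t (Csqrt (Csub (RtoC 1)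
                      (Cdiv (Cmul (RtoC 4) (Cmul (p1 s) (p2 s))) (Cmul t t)))).

Definition C_1 (s : Cplx) : Cplx :=
  Cdiv (Csub (Cadd (Cmul s s) (q s)) (mfun s)) (Cmul (RtoC 2) (p2 s)).
Definition C_2 (s : Cplx) : Cplx :=
  Cdiv (Csub (Cadd (Cmul s s) (q s)) (mfun s)) (Cmul (RtoC 2) (p1 s)).
End Defs.

From Stdlib Require Import Reals Lra Psatz.
Local Open Scope R_scope.

(* With t = s^2 + q and u = sqrt(1 - 4 p1 p2 / t^2), one has 4 p1 p2 = t^2 (1 - u)(1 + u),
   hence |C_1 C_2| = |1 - u| / |1 + u|.  Since |1 + u|^2 - |1 - u|^2 = 4 Re u and
   |1 + u|^2 + |1 - u|^2 = 2 (1 + |u|^2), this ratio is < 1 uniformly as soon as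
   2 Re u / (1 + |u|^2) is bounded away from 0.  On the imaginary axis with p2 = alpha p1 the
   radicand never lies on (-oo, 0] (that would force t to be a real multiple of p1, i.e. w = 0,
   and then 1 + alpha <= 2 sqrt alpha, contradicting alpha <> 1), so the margin is positive;
   it is continuous in w, and it tends to 1 because the radicand tends to 1.  Compactness of
   a large interval [0, Omega] then gives the uniform bound. *)

Definition Cnorm2 (z : Cplx) : R := Re z * Re z + Im z * Im z.

Lemma Cplx_eq z w : Re z = Re w -> Im z = Im w -> z = w.
Proof. destruct z, w; simpl; intros; subst; reflexivity. Qed.

Lemma Cnorm2_ge0 z : 0 <= Cnorm2 z.
Proof. unfold Cnorm2; nra. Qed.

Lemma Cnorm2_mul z w : Cnorm2 (Cmul z w) = Cnorm2 z * Cnorm2 w.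
Proof. unfold Cnorm2; simpl; ring. Qed.

Lemma Cnorm2_Cinv z : Cnorm2 z <> 0 -> Cnorm2 (Cinv z) = / Cnorm2 z.
Proof. unfold Cnorm2, Cinv; simpl; intros; field; assumption. Qed.

Lemma Cnorm2_RtoC x : Cnorm2 (RtoC x) = x * x.
Proof. unfold Cnorm2; simpl; ring. Qed.

Lemma Cmul_Cdiv z w : Cnorm2 w <> 0 -> Cmul w (Cdiv z w) = z.
Proof.
  unfold Cnorm2, Cdiv, Cinv; intros; apply Cplx_eq; simpl; field; assumption.
Qed.

Lemma Cnorm_Cnorm2 z : Cnorm z = sqrt (Cnorm2 z).
Proof. reflexivity. Qed.

Lemma Cnorm_ge0 z : 0 <= Cnorm z.
Proof. apply sqrt_pos. Qed.

Lemma Cnorm_sqr z : Cnorm z * Cnorm z = Cnorm2 z.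
Proof. apply sqrt_sqrt, Cnorm2_ge0. Qed.

Lemma Re_Csqrt_ge0 z : 0 <= Re (Csqrt z).
Proof. apply sqrt_pos. Qed.

Lemma Csqrt_parts z :
  Re (Csqrt z) * Re (Csqrt z) = (Cnorm z + Re z) / 2 /\
  Im (Csqrt z) * Im (Csqrt z) = (Cnorm z - Re z) / 2 /\
  2 * (Re (Csqrt z) * Im (Csqrt z)) = Im z.
Proof.
  pose proof (Cnorm_ge0 z) as Hn0; pose proof (Cnorm_sqr z) as Hn.
  unfold Cnorm2 in Hn; destruct z as [x y]; unfold Csqrt; simpl in *.
  set (n := Cnorm {| Re := x; Im := y |}) in *.
  assert (Hp : 0 <= (n + x) / 2) by nra.
  assert (Hm : 0 <= (n - x) / 2) by nra.
  pose proof (sqrt_sqrt _ Hp); pose proof (sqrt_sqrt _ Hm).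
  assert (Hxy : 0 <= sqrt ((n + x) / 2) * sqrt ((n - x) / 2))
    by (apply Rmult_le_pos; apply sqrt_pos).
  (* the product of the two roots is |y| / 2; the sign test on y fixes its sign *)
  assert (Hsq : (2 * (sqrt ((n + x) / 2) * sqrt ((n - x) / 2))) ^ 2 = y * y) by nra.
  destruct (Rlt_dec y 0); repeat split; nra.
Qed.

Lemma Csqrt_mul_self z : Cmul (Csqrt z) (Csqrt z) = z.
Proof.
  destruct (Csqrt_parts z) as [Hre [Him Hmix]].
  apply Cplx_eq; cbn [Cmul Re Im]; lra.
Qed.

Lemma Cnorm2_Csqrt z : Cnorm2 (Csqrt z) = Cnorm z.
Proof.
  destruct (Csqrt_parts z) as [Hre [Him _]].
  unfold Cnorm2; lra.
Qed.

Lemma Cnorm2_root_product t P1 P2 u :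
  Cnorm2 t <> 0 -> Cnorm2 P1 <> 0 -> Cnorm2 P2 <> 0 ->
  Cmul u u = Csub (RtoC 1) (Cdiv (Cmul (RtoC 4) (Cmul P1 P2)) (Cmul t t)) ->
  Cnorm2 (Cmul (Cdiv (Csub t (Cmul t u)) (Cmul (RtoC 2) P2))
               (Cdiv (Csub t (Cmul t u)) (Cmul (RtoC 2) P1)))
  = Cnorm2 (Csub (RtoC 1) u) / Cnorm2 (Cadd (RtoC 1) u).
Proof.
  intros Ht H1 H2 Hu.
  assert (Htt : Cnorm2 (Cmul t t) <> 0) by (rewrite Cnorm2_mul; nra).
  assert (Hfactor : Cmul (RtoC 4) (Cmul P1 P2)
                    = Cmul (Cmul t t) (Cmul (Csub (RtoC 1) u) (Cadd (RtoC 1) u))).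
  { rewrite <- (Cmul_Cdiv (Cmul (RtoC 4) (Cmul P1 P2)) (Cmul t t)) at 1 by exact Htt.
    f_equal.
    replace (Cdiv (Cmul (RtoC 4) (Cmul P1 P2)) (Cmul t t))
      with (Csub (RtoC 1) (Cmul u u)) by (rewrite Hu; apply Cplx_eq; simpl; ring).
    apply Cplx_eq; simpl; ring. }
  apply (f_equal Cnorm2) in Hfactor.
  rewrite !Cnorm2_mul, Cnorm2_RtoC in Hfactor.
  assert (Hnum : Csub t (Cmul t u) = Cmul t (Csub (RtoC 1) u))
    by (apply Cplx_eq; simpl; ring).
  pose proof (Cnorm2_ge0 P1); pose proof (Cnorm2_ge0 P2).
  pose proof (Cnorm2_ge0 (Csub (RtoC 1) u)); pose proof (Cnorm2_ge0 (Cadd (RtoC 1) u)).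
  assert (Hplus : Cnorm2 (Cadd (RtoC 1) u) <> 0).
  { intro Hz; rewrite Hz in Hfactor; nra. }
  rewrite Hnum; unfold Cdiv.
  rewrite !Cnorm2_mul, !Cnorm2_Cinv, !Cnorm2_mul, !Cnorm2_RtoC
    by (rewrite Cnorm2_mul, Cnorm2_RtoC; nra).
  apply (Rmult_eq_reg_r (4 * 4 * (Cnorm2 P1 * Cnorm2 P2))); [|nra].
  rewrite Hfactor at 2; field; nra.
Qed.

Definition disc (a1 b1 a2 b2 : R) (s : Cplx) : Cplx :=
  let t := Cadd (Cmul s s) (q a1 b1 a2 b2 s) in
  Csub (RtoC 1) (Cdiv (Cmul (RtoC 4) (Cmul (p1 a1 b1 s) (p2 a2 b2 s))) (Cmul t t)).

Lemma Cnorm2_C_1_C_2 a1 b1 a2 b2 s :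
  Cnorm2 (Cadd (Cmul s s) (q a1 b1 a2 b2 s)) <> 0 ->
  Cnorm2 (p1 a1 b1 s) <> 0 -> Cnorm2 (p2 a2 b2 s) <> 0 ->
  Cnorm2 (Cmul (C_1 a1 b1 a2 b2 s) (C_2 a1 b1 a2 b2 s))
  = Cnorm2 (Csub (RtoC 1) (Csqrt (disc a1 b1 a2 b2 s)))
    / Cnorm2 (Cadd (RtoC 1) (Csqrt (disc a1 b1 a2 b2 s))).
Proof. intros; apply Cnorm2_root_product; auto; apply Csqrt_mul_self. Qed.

Definition sqrt_margin (z : Cplx) : R := 2 * Re (Csqrt z) / (1 + Cnorm z).

Lemma Csqrt_ratio_le z d : 0 <= d <= sqrt_margin z ->
  Cnorm2 (Csub (RtoC 1) (Csqrt z)) / Cnorm2 (Cadd (RtoC 1) (Csqrt z)) <= (1 - d) / (1 + d).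
Proof.
  unfold sqrt_margin; intros Hd.
  pose proof (Cnorm_ge0 z); pose proof (Re_Csqrt_ge0 z); pose proof (Cnorm2_Csqrt z).
  assert (Hminus : Cnorm2 (Csub (RtoC 1) (Csqrt z)) = 1 + Cnorm z - 2 * Re (Csqrt z))
    by (unfold Cnorm2 in *; cbn [Csub Cadd RtoC Re Im]; nra).
  assert (Hplus : Cnorm2 (Cadd (RtoC 1) (Csqrt z)) = 1 + Cnorm z + 2 * Re (Csqrt z))
    by (unfold Cnorm2 in *; cbn [Csub Cadd RtoC Re Im]; nra).
  set (x := Re (Csqrt z)) in *; set (n := Cnorm z) in *.
  rewrite Hminus, Hplus.
  assert (Hdx : d * (1 + n) <= 2 * x).
  { destruct Hd as [_ Hd]; apply (Rmult_le_compat_r (1 + n)) in Hd; [|lra].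
    replace (2 * x / (1 + n) * (1 + n)) with (2 * x) in Hd by (field; lra); lra. }
  apply (Rmult_le_reg_r ((1 + n + 2 * x) * (1 + d))); [nra|].
  replace ((1 + n - 2 * x) / (1 + n + 2 * x) * ((1 + n + 2 * x) * (1 + d)))
    with ((1 + n - 2 * x) * (1 + d)) by (field; lra).
  replace ((1 - d) / (1 + d) * ((1 + n + 2 * x) * (1 + d)))
    with ((1 - d) * (1 + n + 2 * x)) by (field; lra).
  nra.
Qed.

Lemma sqrt_margin_pos z : 0 < Cnorm z + Re z -> 0 < sqrt_margin z.
Proof.
  intros Hz; pose proof (Cnorm_ge0 z).
  unfold sqrt_margin, Csqrt; simpl.
  apply Rdiv_lt_0_compat; [|lra].
  apply Rmult_lt_0_compat; [lra|]; apply sqrt_lt_R0; lra.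
Qed.

Lemma sqrt_margin_near_one z : Cnorm2 (Csub (RtoC 1) z) <= 1 / 4 -> 1 / 3 <= sqrt_margin z.
Proof.
  intros Hz; pose proof (Cnorm_ge0 z) as Hn0; pose proof (Cnorm_sqr z) as Hn.
  destruct (Csqrt_parts z) as [Hre _]; pose proof (Re_Csqrt_ge0 z).
  unfold Cnorm2 in Hz, Hn; simpl in Hz.
  unfold sqrt_margin.
  set (x := Re (Csqrt z)) in *; set (n := Cnorm z) in *.
  assert (Hz1 : 1 / 2 <= Re z) by nra.
  assert (n * n <= 4) by nra.
  assert (n <= 2) by nra.
  assert (1 / 2 <= x) by nra.
  apply (Rmult_le_reg_r (1 + n)); [lra|].
  replace (2 * x / (1 + n) * (1 + n)) with (2 * x) by (field; lra).
  lra.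
Qed.

Lemma continuity_pt_comp_sqrt f x :
  continuity_pt f x -> 0 <= f x -> continuity_pt (fun w => sqrt (f w)) x.
Proof.
  intros; apply (continuity_pt_comp f sqrt); [assumption|]; apply continuity_pt_sqrt; assumption.
Qed.

Lemma continuity_pt_cst (c x : R) : continuity_pt (fun _ => c) x.
Proof. apply continuity_pt_const; intros ? ?; reflexivity. Qed.

Definition Ccontinuity_pt (f : R -> Cplx) (x : R) : Prop :=
  continuity_pt (fun w => Re (f w)) x /\ continuity_pt (fun w => Im (f w)) x.

Lemma Ccontinuity_pt_const c x : Ccontinuity_pt (fun _ => c) x.
Proof. split; apply continuity_pt_cst. Qed.

Lemma Ccontinuity_pt_RtoC x : Ccontinuity_pt RtoC x.
Proof.
  split; simpl; [apply derivable_continuous_pt, derivable_pt_id | apply continuity_pt_cst].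
Qed.

Lemma Ccontinuity_pt_add f g x :
  Ccontinuity_pt f x -> Ccontinuity_pt g x -> Ccontinuity_pt (fun w => Cadd (f w) (g w)) x.
Proof. intros [] []; split; simpl; apply continuity_pt_plus; assumption. Qed.

Lemma Ccontinuity_pt_sub f g x :
  Ccontinuity_pt f x -> Ccontinuity_pt g x -> Ccontinuity_pt (fun w => Csub (f w) (g w)) x.
Proof. intros [] []; split; simpl; apply continuity_pt_minus; assumption. Qed.

Lemma Ccontinuity_pt_mul f g x :
  Ccontinuity_pt f x -> Ccontinuity_pt g x -> Ccontinuity_pt (fun w => Cmul (f w) (g w)) x.
Proof.
  intros [] []; split; simpl;
    [apply continuity_pt_minus | apply continuity_pt_plus]; apply continuity_pt_mult; assumption.
Qed.

Lemma Ccontinuity_pt_div f g x :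
  Ccontinuity_pt f x -> Ccontinuity_pt g x -> Cnorm2 (g x) <> 0 ->
  Ccontinuity_pt (fun w => Cdiv (f w) (g w)) x.
Proof.
  intros Hf [Hgr Hgi] Hg; apply Ccontinuity_pt_mul; [assumption|].
  assert (Hn : continuity_pt (fun w => Cnorm2 (g w)) x)
    by (apply continuity_pt_plus; apply continuity_pt_mult; assumption).
  split; simpl; apply continuity_pt_div; try apply continuity_pt_opp; assumption.
Qed.

Lemma continuity_pt_sqrt_margin f x :
  Ccontinuity_pt f x -> continuity_pt (fun w => sqrt_margin (f w)) x.
Proof.
  intros [Hr Hi].
  assert (Hn : continuity_pt (fun w => Cnorm (f w)) x).
  { apply continuity_pt_comp_sqrt; [|apply Cnorm2_ge0].
    apply continuity_pt_plus; apply continuity_pt_mult; assumption. }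
  pose proof (Cnorm_ge0 (f x)); pose proof (Cnorm_sqr (f x)).
  unfold Cnorm2 in *.
  unfold sqrt_margin, Csqrt; simpl.
  apply continuity_pt_div; [| apply continuity_pt_plus; [apply continuity_pt_cst | assumption] | lra].
  apply continuity_pt_mult; [apply continuity_pt_cst|].
  apply continuity_pt_comp_sqrt; [|nra].
  apply continuity_pt_div; [apply continuity_pt_plus; assumption | apply continuity_pt_cst | lra].
Qed.

Definition jw (w : R) : Cplx := Cmul Cj (RtoC w).

Section Imaginary_axis.

Variables a b alpha : R.
Hypotheses (Ha : 0 < a) (Hb : 0 < b) (Halpha : 0 < alpha).

Definition t_jw (w : R) : Cplx :=
  Cadd (Cmul (jw w) (jw w)) (q a b (alpha * a) (alpha * b) (jw w)).
Definition D_jw (w : R) : Cplx :=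
  Cmul (RtoC 4) (Cmul (p1 a b (jw w)) (p2 (alpha * a) (alpha * b) (jw w))).
Definition disc_jw (w : R) : Cplx := disc a b (alpha * a) (alpha * b) (jw w).

Lemma Cnorm2_p1_jw w : Cnorm2 (p1 a b (jw w)) = a * a + b * b * (w * w).
Proof. unfold Cnorm2, jw, p1; simpl; ring. Qed.

Lemma Cnorm2_p2_jw w :
  Cnorm2 (p2 (alpha * a) (alpha * b) (jw w)) = alpha * alpha * (a * a + b * b * (w * w)).
Proof. unfold Cnorm2, jw, p2; simpl; ring. Qed.

Lemma Cnorm2_t_jw w :
  Cnorm2 (t_jw w) = ((1 + alpha) * a - w * w) ^ 2 + ((1 + alpha) * b * w) ^ 2.
Proof. unfold Cnorm2, t_jw, jw, q, p1, p2; simpl; ring. Qed.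

Lemma Cnorm2_t_jw_pos w : 0 < Cnorm2 (t_jw w).
Proof.
  rewrite Cnorm2_t_jw.
  destruct (Req_dec w 0) as [->|Hw].
  - nra.
  - assert (Him : (1 + alpha) * b * w <> 0)
      by (repeat apply Rmult_integral_contrapositive_currified; lra).
    pose proof (Rsqr_pos_lt _ Him); rewrite Rsqr_pow2 in *.
    pose proof (pow2_ge_0 ((1 + alpha) * a - w * w)); lra.
Qed.

Lemma Cnorm2_C_1_C_2_jw w :
  Cnorm2 (Cmul (C_1 a b (alpha * a) (alpha * b) (jw w)) (C_2 a b (alpha * a) (alpha * b) (jw w)))
  = Cnorm2 (Csub (RtoC 1) (Csqrt (disc_jw w))) / Cnorm2 (Cadd (RtoC 1) (Csqrt (disc_jw w))).
Proof.
  pose proof (Cnorm2_t_jw_pos w) as Ht.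
  pose proof (Cnorm2_p1_jw w); pose proof (Cnorm2_p2_jw w).
  assert (0 <= b * b * (w * w)) by nra.
  assert (0 < alpha * alpha * (a * a + b * b * (w * w))) by (apply Rmult_lt_0_compat; nra).
  apply Cnorm2_C_1_C_2; apply Rgt_not_eq; [exact Ht | nra | nra].
Qed.

Lemma D_jw_neq_real_multiple_t_sqr w k : alpha <> 1 -> 0 <= w -> 1 <= k ->
  D_jw w <> Cmul (RtoC k) (Cmul (t_jw w) (t_jw w)).
Proof.
  intros Halpha1 Hw Hk E.
  assert (Er : 4 * alpha * (a * a - b * b * w * w)
               = k * (((1 + alpha) * a - w * w) ^ 2 - ((1 + alpha) * b * w) ^ 2))
    by (apply (f_equal Re) in E; unfold D_jw, t_jw, jw, q, p1, p2 in E; simpl in E; nra).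
  assert (Ei : 8 * alpha * a * b * w = k * (2 * ((1 + alpha) * a - w * w) * ((1 + alpha) * b * w)))
    by (apply (f_equal Im) in E; unfold D_jw, t_jw, jw, q, p1, p2 in E; simpl in E; nra).
  clear E.
  (* k (1 + alpha)^2 > 4 alpha is where alpha <> 1 enters *)
  set (c := k * (1 + alpha) ^ 2 - 4 * alpha).
  assert (Hc : 0 < c).
  { pose proof (Rsqr_pos_lt (1 - alpha) ltac:(lra)). unfold Rsqr in *. unfold c. nra. }
  destruct (Rle_lt_or_eq_dec 0 w Hw) as [Hw0|<-].
  - set (T := (1 + alpha) * a - w * w) in *.
    assert (Ei' : 4 * alpha * a = k * (1 + alpha) * T).
    { apply (Rmult_eq_reg_r (2 * b * w)); [nra|]. nra. }
    assert (Er' : 4 * alpha * a * a - k * T ^ 2 = - c * (b * w) ^ 2) by (unfold c; nra).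
    assert (E : 4 * alpha * a * a * c = k * (1 + alpha) ^ 2 * (4 * alpha * a * a - k * T ^ 2)).
    { unfold c.
      replace (k * (1 + alpha) ^ 2 * (4 * alpha * a * a - k * T ^ 2))
        with (k * (1 + alpha) ^ 2 * (4 * alpha * a * a) - (k * (1 + alpha) * T) ^ 2) by ring.
      rewrite <- Ei'; ring. }
    rewrite Er' in E.
    assert (0 < b * w) by nra.
    assert (0 < 4 * alpha * a * a * c) by (repeat apply Rmult_lt_0_compat; lra).
    assert (0 < k * (1 + alpha) ^ 2 * (c * (b * w) ^ 2))
      by (repeat apply Rmult_lt_0_compat; try apply pow_lt; nra).
    assert (4 * alpha * a * a * c = - (k * (1 + alpha) ^ 2 * (c * (b * w) ^ 2)))
      by (rewrite E; ring).
    lra.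
  - assert (c * (a * a) = 0).
    { replace (c * (a * a))
        with (k * (((1 + alpha) * a - 0 * 0) ^ 2 - ((1 + alpha) * b * 0) ^ 2)
              - 4 * alpha * (a * a - b * b * 0 * 0)) by (unfold c; ring).
      rewrite Er; ring. }
    assert (0 < c * (a * a)) by (apply Rmult_lt_0_compat; nra).
    lra.
Qed.

Lemma disc_jw_off_nonpos_axis w : alpha <> 1 -> 0 <= w -> 0 < Cnorm (disc_jw w) + Re (disc_jw w).
Proof.
  intros Halpha1 Hw.
  destruct (Rlt_or_le 0 (Cnorm (disc_jw w) + Re (disc_jw w))) as [|Hle]; [assumption|exfalso].
  pose proof (Cnorm_ge0 (disc_jw w)); pose proof (Cnorm_sqr (disc_jw w)); unfold Cnorm2 in *.
  assert (Him : Im (disc_jw w) = 0) by nra.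
  apply (D_jw_neq_real_multiple_t_sqr w (1 - Re (disc_jw w)) Halpha1 Hw); [nra|].
  assert (Htt : Cnorm2 (Cmul (t_jw w) (t_jw w)) <> 0)
    by (rewrite Cnorm2_mul; pose proof (Cnorm2_t_jw_pos w); nra).
  rewrite <- (Cmul_Cdiv (D_jw w) (Cmul (t_jw w) (t_jw w)) Htt) at 1.
  replace (Cdiv (D_jw w) (Cmul (t_jw w) (t_jw w))) with (Csub (RtoC 1) (disc_jw w))
    by (apply Cplx_eq; unfold disc_jw, disc; simpl; ring).
  apply Cplx_eq; cbn [Cmul Csub RtoC Re Im]; rewrite Him; ring.
Qed.

Let Omega : R := 1 + 4 * (1 + alpha) * a + 64 * alpha * (b * b).

Lemma disc_jw_near_one w : Omega <= w -> Cnorm2 (Csub (RtoC 1) (disc_jw w)) <= 1 / 4.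
Proof.
  unfold Omega; intros Hw.
  set (S := w * w).
  assert (HS : 1 + 4 * (1 + alpha) * a + 64 * alpha * (b * b) <= S)
    by (assert (0 <= alpha * (b * b)) by nra; assert (1 <= w) by nra; unfold S; nra).
  assert (Htt : Cnorm2 (Cmul (t_jw w) (t_jw w)) <> 0)
    by (rewrite Cnorm2_mul; pose proof (Cnorm2_t_jw_pos w); nra).
  replace (Csub (RtoC 1) (disc_jw w)) with (Cdiv (D_jw w) (Cmul (t_jw w) (t_jw w)))
    by (apply Cplx_eq; unfold disc_jw, disc; simpl; ring).
  unfold Cdiv; rewrite Cnorm2_mul, Cnorm2_Cinv by exact Htt.
  unfold D_jw; rewrite !Cnorm2_mul, Cnorm2_RtoC, Cnorm2_p1_jw, Cnorm2_p2_jw.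
  fold S.
  set (P := a * a + b * b * S).
  assert (HP : 0 < P) by (unfold P, S; nra).
  (* |t|^2 >= (S - (1 + alpha) a)^2 >= S^2 / 4 >= 8 alpha P *)
  assert (Ht : 8 * alpha * P <= Cnorm2 (t_jw w)).
  { rewrite Cnorm2_t_jw; fold S.
    assert (0 <= ((1 + alpha) * b * w) ^ 2) by apply pow2_ge_0.
    assert (0 <= alpha * (b * b)) by nra.
    assert (Hhalf : 0 <= S / 2 <= S - (1 + alpha) * a) by nra.
    assert (S * S / 4 <= ((1 + alpha) * a - S) ^ 2).
    { replace (((1 + alpha) * a - S) ^ 2) with ((S - (1 + alpha) * a) * (S - (1 + alpha) * a))
        by ring.
      apply Rle_trans with ((S / 2) * (S / 2)); [lra | apply Rmult_le_compat; lra]. }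
    assert (64 * alpha * (a * a) <= (4 * (1 + alpha) * a) ^ 2)
      by (pose proof (pow2_ge_0 (1 - alpha)); nra).
    assert (Hc : 0 <= 4 * (1 + alpha) * a <= S) by nra.
    assert ((4 * (1 + alpha) * a) ^ 2 <= S * S)
      by (rewrite <- Rsqr_pow2; apply Rmult_le_compat; lra).
    assert (8 * alpha * (a * a) <= S * S / 8) by lra.
    assert (8 * alpha * (b * b) * S <= S * S / 8) by nra.
    unfold P; nra. }
  pose proof (Cnorm2_t_jw_pos w).
  apply (Rmult_le_reg_r (Cnorm2 (t_jw w) * Cnorm2 (t_jw w))); [nra|].
  rewrite Rmult_assoc, Rinv_l by nra.
  assert (0 <= alpha * P) by nra.
  assert ((8 * (alpha * P)) * (8 * (alpha * P)) <= Cnorm2 (t_jw w) * Cnorm2 (t_jw w))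
    by (apply Rmult_le_compat; lra).
  nra.
Qed.

Lemma Ccontinuity_pt_disc_jw x : Ccontinuity_pt disc_jw x.
Proof.
  assert (Hs : Ccontinuity_pt jw x)
    by (apply (Ccontinuity_pt_mul (fun _ => Cj)); [apply Ccontinuity_pt_const | apply Ccontinuity_pt_RtoC]).
  assert (Hp1 : Ccontinuity_pt (fun w => p1 a b (jw w)) x)
    by (apply (Ccontinuity_pt_add (fun _ => _)); [|apply (Ccontinuity_pt_mul (fun _ => _))];
        auto using Ccontinuity_pt_const).
  assert (Hp2 : Ccontinuity_pt (fun w => p2 (alpha * a) (alpha * b) (jw w)) x)
    by (apply (Ccontinuity_pt_add (fun _ => _)); [|apply (Ccontinuity_pt_mul (fun _ => _))];
        auto using Ccontinuity_pt_const).
  assert (Ht : Ccontinuity_pt t_jw x)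
    by (apply Ccontinuity_pt_add; [apply Ccontinuity_pt_mul | apply Ccontinuity_pt_add]; assumption).
  apply (Ccontinuity_pt_sub (fun _ => _)); [apply Ccontinuity_pt_const|].
  apply Ccontinuity_pt_div.
  - apply (Ccontinuity_pt_mul (fun _ => _)); [apply Ccontinuity_pt_const|].
    apply Ccontinuity_pt_mul; assumption.
  - apply Ccontinuity_pt_mul; assumption.
  - change (Cnorm2 (Cmul (t_jw x) (t_jw x)) <> 0).
    rewrite Cnorm2_mul; pose proof (Cnorm2_t_jw_pos x); nra.
Qed.

Lemma sqrt_margin_disc_jw_lower_bound : alpha <> 1 ->
  exists d, 0 < d < 1 /\ forall w, 0 <= w -> d <= sqrt_margin (disc_jw w).
Proof.
  intros Halpha1.
  assert (HOmega : 0 <= Omega) by (unfold Omega; assert (0 <= alpha * (b * b)) by nra; nra).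
  destruct (continuity_ab_min (fun w => sqrt_margin (disc_jw w)) 0 Omega HOmega)
    as [wmin [Hmin Hwmin]].
  { intros c _; apply continuity_pt_sqrt_margin, Ccontinuity_pt_disc_jw. }
  pose proof (sqrt_margin_pos _ (disc_jw_off_nonpos_axis wmin Halpha1 (proj1 Hwmin))).
  exists (Rmin (1 / 3) (sqrt_margin (disc_jw wmin))); split.
  - split; [apply Rmin_glb_lt; lra | pose proof (Rmin_l (1 / 3) (sqrt_margin (disc_jw wmin))); lra].
  - intros w Hw; destruct (Rle_or_lt w Omega).
    + apply Rle_trans with (sqrt_margin (disc_jw wmin)); [apply Rmin_r | apply Hmin; lra].
    + apply Rle_trans with (1 / 3); [apply Rmin_l|].
      apply sqrt_margin_near_one, disc_jw_near_one; lra.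
Qed.

End Imaginary_axis.

Theorem lemma2 (a1 b1 alpha : R) :
  0 < a1 -> 0 < b1 -> 0 < alpha -> alpha <> 1 ->
  exists M : R, M < 1 /\
    forall w : R, 0 <= w ->
      Cnorm (Cmul (C_1 a1 b1 (alpha * a1)%R (alpha * b1)%R (Cmul Cj (RtoC w)))
                  (C_2 a1 b1 (alpha * a1)%R (alpha * b1)%R (Cmul Cj (RtoC w)))) <= M.
Proof.
  intros Ha Hb Halpha Halpha1.
  destruct (sqrt_margin_disc_jw_lower_bound a1 b1 alpha Ha Hb Halpha Halpha1)
    as [d [Hd Hmargin]].
  exists (sqrt ((1 - d) / (1 + d))); split.
  - rewrite <- sqrt_1 at 3; apply sqrt_lt_1_alt; split.
    + unfold Rdiv; apply Rmult_le_pos; [lra | left; apply Rinv_0_lt_compat; lra].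
    + apply (Rmult_lt_reg_r (1 + d)); [lra|].
      unfold Rdiv; rewrite Rmult_assoc, Rinv_l; lra.
  - intros w Hw; rewrite Cnorm_Cnorm2; apply sqrt_le_1_alt.
    pose proof (Cnorm2_C_1_C_2_jw a1 b1 alpha Ha Hb Halpha w) as Hratio.
    unfold jw in Hratio; rewrite Hratio.
    apply Csqrt_ratio_le; split; [lra | apply Hmargin; assumption].
Qed.
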